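(* Let $(V_k)_{k=1,\dots,K}$ be a $\sigma$-admissible family of affine spaces for some $\sigma>0$. For $w\in W$ let $u_k^*(w)$, $k=1,\dots,K$, be the PBDW estimators, and define $u^*(w)=u^*_{k^*}(w)$. (i) If $k^*=k^*(w)$ is any minimizer of $k\mapsto\operatorname{dist}(u_k^*(w),\mathcal M)$ over $\{1,\dots,K\}$, then $$\sup_{u\in\mathcal M}\|u-u^*(P_Wu)\|\le\delta_\sigma.$$ (ii) If $\mathcal S:V\to[0,\infty)$ satisfies $r\operatorname{dist}(v,\mathcal M)\le\mathcal S(v)\le R\operatorname{dist}(v,\mathcal M)$ for all $v\in V$ with constants $0<r\le R$, and $k^*=k^*(w)$ is any minimizer of $k\mapsto\mathcal S(u_k^*(w))$, then $$\sup_{u\in\mathcal M}\|u-u^*(P_Wu)\|\le\delta_{\kappa\sigma},\qquad\kappa=R/r.$$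
   Context: $V$ is a real Hilbert space, $\mathcal M\subset V$ is compact, $W\subset V$ is a subspace of finite dimension $m$, $P_W$ is the orthogonal projection onto $W$ and $W^\perp$ its orthogonal complement. For a linear subspace $\bar V$ with $\bar V\cap W^\perp=\{0\}$, $\mu(\bar V,W)=\max_{v\in\bar V,\,v\ne0}\|v\|/\|P_Wv\|$ (set $\mu(\{0\},W)=1$). A family of affine spaces $V_k=\bar u_k+\bar V_k$ ($\bar u_k\in V$, $\bar V_k$ linear of dimension $n_k\le m$, $\bar V_k\cap W^\perp=\{0\}$), $k=1,\dots,K$, is $\sigma$-admissible if there is a partition $\mathcal M=\bigcup_{k=1}^K\mathcal M_k$ and numbers $\varepsilon_k$ with $\operatorname{dist}(\mathcal M_k,V_k):=\sup_{u\in\mathcal M_k}\operatorname{dist}(u,V_k)\le\varepsilon_k$ and $\mu(\bar V_k,W)\,\varepsilon_k\le\sigma$ for all $k$. The PBDW estimators are $u_k^*(w)=\operatorname{argmin}\{\operatorname{dist}(v,V_k): v\in w+W^\perp\}$. For $\sigma\ge0$, $\mathcal M_\sigma=\{v\in V:\operatorname{dist}(v,\mathcal M)\le\sigma\}$ and $\delta_\sigma=\sup\{\|u-v\|: u,v\in\mathcal M_\sigma,\ u-v\in W^\perp\}$. *)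

From HB Require Import structures.
From mathcomp Require Import all_boot all_order all_algebra.
From mathcomp Require Import all_classical all_reals all_analysis.
Set Implicit Arguments. Unset Strict Implicit. Unset Printing Implicit Defensive.
Import Order.TTheory GRing.Theory Num.Theory.
Import numFieldNormedType.Exports.
Local Open Scope classical_set_scope.
Local Open Scope ring_scope.

Section Defs.
Variables (R : realType) (V : normedModType R).

Definition is_inner_product (ip : V -> V -> R) : Prop :=
  (forall u v, ip u v = ip v u) /\
  (forall a u v w, ip (a *: u + v) w = a * ip u w + ip v w) /\
  (forall v, ip v v = `|v| ^+ 2).

Definition lspan (n : nat) (e : 'I_n -> V) : set V :=
  range (fun c : 'I_n -> R => \sum_(i < n) c i *: e i).

Definition lin_indep (n : nat) (e : 'I_n -> V) : Prop :=
  forall c : 'I_n -> R, \sum_(i < n) c i *: e i = 0 -> forall i, c i = 0.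

Definition orth (ip : V -> V -> R) (W : set V) : set V :=
  [set v | forall w, W w -> ip v w = 0].

Definition is_orth_proj (ip : V -> V -> R) (W : set V) (P : V -> V) : Prop :=
  forall v, W (P v) /\ orth ip W (v - P v).

(* distance from a point to a set, in the extended reals (inf of the empty set = +oo) *)
Definition dist_set (v : V) (A : set V) : \bar R :=
  ereal_inf [set (`|v - a|)%:E | a in A].

Definition mu (P : V -> V) (Vbar : set V) : \bar R :=
  if `[< Vbar `<=` [set 0] >] then 1%E
  else ereal_sup [set (`|v| / `|P v|)%:E | v in Vbar `\ 0].

Definition Msig (M : set V) (s : R) : set V := [set v | (dist_set v M <= s%:E)%E].

Definition delta (ip : V -> V -> R) (W : set V) (M : set V) (s : R) : \bar R :=
  ereal_sup [set x : \bar R | exists u v : V,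
     [/\ Msig M s u, Msig M s v, orth ip W (u - v) & x = (`|u - v|)%:E]].

Definition affine (ubar : V) (n : nat) (e : 'I_n -> V) : set V :=
  [set ubar + x | x in lspan e].

Definition admissible (P : V -> V) (M : set V) (K : nat) (ubar : 'I_K -> V)
    (n : 'I_K -> nat) (e : forall k, 'I_(n k) -> V) (s : R) : Prop :=
  exists (Mk : 'I_K -> set V) (eps : 'I_K -> R),
    M = \bigcup_(k in [set: 'I_K]) Mk k /\
    (forall k l, k != l -> Mk k `&` Mk l = set0) /\
    forall k,
      (forall u, Mk k u -> (dist_set u (affine (ubar k) (e k)) <= (eps k)%:E)%E) /\
      (mu P (lspan (e k)) * (eps k)%:E <= s%:E)%E.

Definition is_pbdw (ip : V -> V -> R) (W : set V) (A : set V) (w x : V) : Prop :=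
  orth ip W (x - w) /\
  forall v, orth ip W (v - w) -> (dist_set x A <= dist_set v A)%E.

End Defs.

From HB Require Import structures.
From mathcomp Require Import all_boot all_order all_algebra.
From mathcomp Require Import all_classical all_reals all_analysis.
From mathcomp Require Import ring lra.
Import Order.TTheory GRing.Theory Num.Theory.
Import numFieldNormedType.Exports.
Set Implicit Arguments. Unset Strict Implicit.
Local Open Scope classical_set_scope.
Local Open Scope ring_scope.

(* For u in M, the data w = P_W u lies in W and u - w is in the
   orthogonal complement of W.  If u belongs to the cell M_k of the admissible
   partition, the standard PBDW estimate
     ||u - u_k^*(w)|| <= mu(Vbar_k, W) dist(u, V_k) <= mu(Vbar_k, W) eps_k <= sigma
   shows that some candidate u_k^*(w) lies within sigma of M.  Whatever
   selection rule is used, the selected candidate is therefore in M_sigma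
   (resp. in M_{kappa sigma} when the selection uses a surrogate S comparable
   to dist(., M)), and it differs from u by a vector of W^perp; this is exactly
   a competitor in the supremum defining delta. *)

Lemma sqr_addr_le_hypot (R : rcfType) (m p q t : R) :
  1 <= m -> 0 <= p -> 0 <= q -> 0 <= t -> q ^+ 2 <= (m ^+ 2 - 1) * p ^+ 2 ->
  (t + q) ^+ 2 <= m ^+ 2 * (p ^+ 2 + t ^+ 2).
Proof.
move=> m1 p0 q0 t0 qp.
have m21 : 0 <= m ^+ 2 - 1 by nra.
set c := Num.sqrt (m ^+ 2 - 1).
have cE : c ^+ 2 = m ^+ 2 - 1 by rewrite sqr_sqrtr.
have qc : q <= c * p.
  by rewrite -(ler_pXn2r (n:=2)) ?nnegrE ?mulr_ge0 ?sqrtr_ge0 // exprMn cE.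
(* Cauchy-Schwarz in the plane for (1, c) and (t, p). *)
have := sqr_ge0 (c * t - p).
nra.
Qed.

Lemma dist_set_le (R : realType) (V : normedModType R) (A : set V) x a :
  A a -> (dist_set x A <= (`|x - a|)%:E)%E.
Proof. by move=> Aa; apply: ereal_inf_lbound; exists a. Qed.

Lemma Msig_refl (R : realType) (V : normedModType R) (M : set V) s u :
  0 <= s -> M u -> Msig M s u.
Proof.
move=> s0 Mu; apply: le_trans (dist_set_le u Mu) _.
by rewrite subrr normr0 lee_fin.
Qed.

Section InnerProduct.
Variables (R : realType) (V : normedModType R) (ip : V -> V -> R).
Hypothesis ip_inner : is_inner_product ip.

Lemma ipC u v : ip u v = ip v u. Proof. by case: ip_inner. Qed.

Lemma ip_norm v : ip v v = `|v| ^+ 2. Proof. by case: ip_inner => _ []. Qed.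

Lemma ipDl u v w : ip (u + v) w = ip u w + ip v w.
Proof. by case: ip_inner => _ [+ _] => /(_ 1 u v w); rewrite scale1r mul1r. Qed.

Lemma ip0l w : ip 0 w = 0.
Proof. by apply: (addrI (ip 0 w)); rewrite -ipDl !addr0. Qed.

Lemma ipZl a u w : ip (a *: u) w = a * ip u w.
Proof.
by case: ip_inner => _ [+ _] => /(_ a u 0 w); rewrite !addr0 ip0l addr0.
Qed.

Lemma ipNl u w : ip (- u) w = - ip u w.
Proof. by rewrite -scaleN1r ipZl mulN1r. Qed.

Lemma ipBl u v w : ip (u - v) w = ip u w - ip v w.
Proof. by rewrite ipDl ipNl. Qed.

Lemma ipZr a u w : ip w (a *: u) = a * ip w u.
Proof. by rewrite ipC ipZl ipC. Qed.

Lemma ipDr u v w : ip w (u + v) = ip w u + ip w v.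
Proof. by rewrite ipC ipDl !(ipC w). Qed.

Lemma ip_suml n (c : 'I_n -> R) (e : 'I_n -> V) w :
  ip (\sum_(i < n) c i *: e i) w = \sum_(i < n) c i * ip (e i) w.
Proof.
elim/big_rec2: _ => [|i y1 y2 _ <-]; first by rewrite ip0l.
by rewrite ipDl ipZl.
Qed.

Lemma sqr_normD u v : `|u + v| ^+ 2 = `|u| ^+ 2 + `|v| ^+ 2 + 2 * ip u v.
Proof. by rewrite -!ip_norm ipDl !ipDr (ipC v u); ring. Qed.

Lemma orthD W u v : orth ip W u -> orth ip W v -> orth ip W (u + v).
Proof. by move=> uW vW w Ww; rewrite ipDl uW // vW // addr0. Qed.

Lemma orthZ W a u : orth ip W u -> orth ip W (a *: u).
Proof. by move=> uW w Ww; rewrite ipZl uW // mulr0. Qed.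

Lemma orthB W u v : orth ip W u -> orth ip W v -> orth ip W (u - v).
Proof. by move=> uW vW; rewrite -scaleN1r; apply/orthD/orthZ. Qed.

Lemma lspan0 n (e : 'I_n -> V) : lspan e 0.
Proof. by exists (fun _ => 0) => //; rewrite big1 // => i _; rewrite scale0r. Qed.

Lemma lspanB n (e : 'I_n -> V) u v : lspan e u -> lspan e v -> lspan e (u - v).
Proof.
move=> [c _ <-] [d _ <-]; exists (fun i => c i - d i) => //=.
by rewrite -sumrB; apply: eq_bigr => i _; rewrite scalerBl.
Qed.

Lemma lspanN n (e : 'I_n -> V) u : lspan e u -> lspan e (- u).
Proof. by move=> eu; rewrite -sub0r; apply: lspanB => //; apply: lspan0. Qed.

Lemma ip_lspan_eq0 n (e : 'I_n -> V) z :
  (forall j, ip z (e j) = 0) -> forall v, lspan e v -> ip z v = 0.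
Proof.
move=> ze v [c _ <-]; rewrite ipC ip_suml big1 // => i _.
by rewrite ipC ze mulr0.
Qed.

Lemma ip_eq0_of_norm_min z y :
  (forall t : R, `|z| <= `|z + t *: y|) -> ip z y = 0.
Proof.
move=> zmin; set s := ip z y; set Y := `|y| ^+ 2.
have quad t : 0 <= 2 * t * s + t ^+ 2 * Y.
  have := zmin t; rewrite -(ler_pXn2r (n:=2)) ?nnegrE //.
  by rewrite sqr_normD normrZ exprMn ipZr -/s -/Y real_normK ?num_real //; lra.
have Y0 : 0 <= Y by rewrite sqr_ge0.
(* At t = -s/(Y+1) the quadratic equals -s^2 (Y+2)/(Y+1)^2. *)
set t := - s / (Y + 1).
have tY : t * (Y + 1) = - s by rewrite /t divfK // gt_eqF // ltr_pwDr.
have : 0 <= (2 * t * s + t ^+ 2 * Y) * (Y + 1) ^+ 2.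
  by apply: mulr_ge0; rewrite ?quad ?sqr_ge0.
have -> : (2 * t * s + t ^+ 2 * Y) * (Y + 1) ^+ 2 =
    2 * (t * (Y + 1)) * s * (Y + 1) + (t * (Y + 1)) ^+ 2 * Y by ring.
rewrite tY => H.
have : s ^+ 2 * (Y + 2) <= 0 by nra.
have := sqr_ge0 s; nra.
Qed.

Lemma orth_residual_exists n (e : 'I_n -> V) : lin_indep e -> forall z,
  exists c : 'I_n -> R, forall j, ip (z - \sum_(i < n) c i *: e i) (e j) = 0.
Proof.
move=> eI z.
pose G : 'M[R]_n := \matrix_(i, j) ip (e i) (e j).
have sumG (c : 'rV[R]_n) j : (c *m G) 0 j = ip (\sum_(i < n) c 0 i *: e i) (e j).
  by rewrite mxE ip_suml; apply: eq_bigr => i _; rewrite mxE.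
have G_inj (c : 'rV[R]_n) : c *m G = 0 -> c = 0.
  move=> cG0.
  have c_orth j : ip (\sum_(i < n) c 0 i *: e i) (e j) = 0.
    by rewrite -sumG cG0 mxE.
  have : \sum_(i < n) c 0 i *: e i = 0.
    have := ip_lspan_eq0 c_orth (ex_intro2 _ _ (fun i => c 0 i) I erefl).
    by rewrite ip_norm => /eqP; rewrite sqrf_eq0 normr_eq0 => /eqP.
  by move/eI => c0; apply/rowP => i; rewrite mxE c0.
have G_unit : G \in unitmx.
  rewrite -row_free_unit -kermx_eq0; apply/eqP/row_matrixP => i.
  by rewrite row0; apply: G_inj; rewrite -row_mul mulmx_ker row0.
pose c := \row_j ip z (e j) *m invmx G.
exists (fun i => c 0 i) => j.
by rewrite ipBl -sumG mulmxKV // mxE subrr.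
Qed.

Lemma affine_best_approx (ubar : V) n (e : 'I_n -> V) : lin_indep e -> forall z,
  exists a, [/\ affine ubar e a, forall v, lspan e v -> ip (z - a) v = 0
             & dist_set z (affine ubar e) = (`|z - a|)%:E].
Proof.
move=> eI z; have [c zc] := orth_residual_exists eI (z - ubar).
pose a := ubar + \sum_(i < n) c i *: e i.
have aV : affine ubar e a by exists (\sum_(i < n) c i *: e i) => //; exists c.
have za_orth v : lspan e v -> ip (z - a) v = 0.
  by apply: ip_lspan_eq0 => j; rewrite /a opprD addrA; exact: zc.
exists a; split=> //; apply/eqP; rewrite eq_le dist_set_le //=.
apply: le_ereal_inf_tmp => _ [_ [x ex <-] <-]; rewrite lee_fin.
rewrite -(ler_pXn2r (n:=2)) ?nnegrE //.
have -> : z - (ubar + x) = (z - a) + (a - (ubar + x)) by rewrite addrA subrK.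
rewrite [X in _ <= X]sqr_normD za_orth ?mulr0 ?addr0 ?lerDl ?sqr_ge0 //.
by rewrite /a opprD addrA (addrC ubar) addrK; apply: lspanB => //; exists c.
Qed.

Section Projection.
Variables (W : set V) (P : V -> V).
Hypothesis P_proj : is_orth_proj ip W P.

Lemma sqr_norm_proj v : `|v| ^+ 2 = `|P v| ^+ 2 + `|v - P v| ^+ 2.
Proof.
have {1}-> : v = P v + (v - P v) by rewrite addrC subrK.
by have [PvW vPv] := P_proj v; rewrite [LHS]sqr_normD (ipC (P v)) vPv // mulr0 addr0.
Qed.

Lemma norm_proj_le v : `|P v| <= `|v|.
Proof.
by rewrite -(ler_pXn2r (n:=2)) ?nnegrE // [X in _ <= X]sqr_norm_proj lerDl sqr_ge0.
Qed.

Lemma cap_orth_eq0 (S : set V) v :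
  S `&` orth ip W = [set 0] -> S v -> orth ip W v -> v = 0.
Proof. by move=> SW Sv vW; have : (S `&` orth ip W) v by []; rewrite SW. Qed.

Lemma proj_neq0 (S : set V) v :
  S `&` orth ip W = [set 0] -> S v -> v != 0 -> P v != 0.
Proof.
move=> SW Sv; apply: contraNneq => Pv0.
by apply/eqP; apply: cap_orth_eq0 SW Sv _; have := (P_proj v).2; rewrite Pv0 subr0.
Qed.

Lemma mu_ratio_le (S : set V) v : S v -> v != 0 ->
  ((`|v| / `|P v|)%:E <= mu P S)%E.
Proof.
move=> Sv v0; rewrite /mu; case: asboolP => [S0|_].
  by have /= /eqP := S0 v Sv; rewrite (negbTE v0).
by apply: ereal_sup_ubound; exists v => //; split => //=; exact/eqP.
Qed.

Lemma exists_nonzero (S : set V) : ~ S `<=` [set 0] -> exists2 v, S v & v != 0.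
Proof.
move=> S0; apply: contrapT => noS; apply: S0 => v Sv /=.
by apply: contrapT => v0; apply: noS; exists v => //; apply/eqP.
Qed.

Lemma mu_ge1 (S : set V) : S `&` orth ip W = [set 0] -> (1 <= mu P S)%E.
Proof.
move=> SW; case: (asboolP (S `<=` [set 0])) => [S0|/exists_nonzero [v Sv v0]].
  by rewrite /mu asboolT.
apply: le_trans (mu_ratio_le Sv v0); rewrite lee_fin.
by rewrite ler_pdivlMr ?mul1r ?norm_proj_le // normr_gt0 (proj_neq0 SW).
Qed.

Lemma norm_le_mu_normD n (e : 'I_n -> V) h d :
  lspan e `&` orth ip W = [set 0] -> orth ip W h -> lspan e d ->
  (`|h|%:E <= mu P (lspan e) * `|h + d|%:E)%E.
Proof.
move=> eW hW ed; have := mu_ge1 eW.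
case Emu : (mu P (lspan e)) => [m| |] //; last first.
  move=> _; have [hd0|hd0] := eqVneq (h + d) 0.
    have hN : h = - d by apply/eqP; rewrite -subr_eq0 opprK hd0.
    have eh : lspan e h by rewrite hN; apply: lspanN.
    by rewrite hd0 (cap_orth_eq0 eW eh hW) normr0 mule0.
  by rewrite gt0_mulye ?leey // lte_fin normr_gt0.
rewrite !lee_fin => m1; have m0 : 0 <= m := le_trans ler01 m1.
have dm : `|d| <= m * `|P d|.
  have [->|d0] := eqVneq d 0; first by rewrite normr0 mulr_ge0.
  have := mu_ratio_le ed d0; rewrite Emu lee_fin ler_pdivrMr //.
  by rewrite normr_gt0 (proj_neq0 eW).
(* Reduce to sqr_addr_le_hypot via the orthogonal splitting h + d = P d + (h + (d - P d)). *)
have hdE : h + d = P d + (h + (d - P d)) by rewrite addrCA (addrC (P d)) subrK.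
have hd2 : `|h + d| ^+ 2 = `|P d| ^+ 2 + `|h + (d - P d)| ^+ 2.
  by rewrite hdE [LHS]sqr_normD (ipC (P d)) (orthD hW (P_proj d).2 (P_proj d).1) mulr0 addr0.
have dPd2 : `|d - P d| ^+ 2 <= (m ^+ 2 - 1) * `|P d| ^+ 2.
  have : `|d| ^+ 2 <= (m * `|P d|) ^+ 2 by rewrite ler_pXn2r ?nnegrE ?mulr_ge0.
  by rewrite sqr_norm_proj exprMn; lra.
have hle : `|h| <= `|h + (d - P d)| + `|d - P d|.
  by have := ler_normB (h + (d - P d)) (d - P d); rewrite addrK.
apply: le_trans hle _; rewrite -(ler_pXn2r (n:=2)) ?nnegrE ?mulr_ge0 ?addr_ge0 //.
by rewrite exprMn hd2; apply: sqr_addr_le_hypot.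
Qed.

Lemma pbdw_error_le (ubar : V) n (e : 'I_n -> V) w u x :
  lin_indep e -> lspan e `&` orth ip W = [set 0] ->
  orth ip W (u - w) -> is_pbdw ip W (affine ubar e) w x ->
  (`|u - x|%:E <= mu P (lspan e) * dist_set u (affine ubar e))%E.
Proof.
move=> eI eW uw [xw xmin].
have [a [aV a_orth x_dist]] := affine_best_approx ubar eI x.
have [au [auV _ u_dist]] := affine_best_approx ubar eI u.
(* Moving x along W^perp keeps it admissible, so x - a is orthogonal to W^perp. *)
have xa_orth y : orth ip W y -> ip (x - a) y = 0.
  move=> yW; apply: ip_eq0_of_norm_min => t.
  have xty : orth ip W (x + t *: y - w) by rewrite addrAC; apply: orthD xw (orthZ t yW).
  rewrite -lee_fin -x_dist; apply: le_trans (xmin _ xty) _.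
  by apply: ereal_inf_lbound; exists a => //; rewrite addrAC.
have uxW : orth ip W (u - x).
  have -> : u - x = (u - w) - (x - w) by rewrite opprB addrA subrK.
  exact: orthB.
have a_au : lspan e (a - au).
  case: aV => xa exa <-; case: auV => xb exb <-.
  by rewrite opprD addrACA subrr add0r; apply: lspanB.
have shift : `|u - x + (a - au)| <= `|u - au|.
  rewrite -(ler_pXn2r (n:=2)) ?nnegrE //.
  have -> : u - au = (u - x + (a - au)) + (x - a).
    by rewrite -addrA (addrC (a - au)) [(x - a) + _]addrA subrK addrA subrK.
  rewrite [X in _ <= X]sqr_normD ipC ipDr xa_orth // a_orth // addr0 mulr0 addr0.
  by rewrite lerDl sqr_ge0.
apply: le_trans (norm_le_mu_normD eW uxW a_au) _.
rewrite u_dist; apply: lee_wpmul2l; last by rewrite lee_fin.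
exact: le_trans lee01 (mu_ge1 eW).
Qed.

End Projection.
End InnerProduct.

Section Recovery.
Local Unset Implicit Arguments.
Variables (R : realType) (V : normedModType R) (ip : V -> V -> R).
Hypothesis ip_inner : is_inner_product ip.
Variables (M : set V) (m : nat) (b : 'I_m -> V) (P : V -> V).
Hypothesis P_proj : is_orth_proj ip (lspan b) P.
Variables (K : nat) (ubar : 'I_K -> V) (n : 'I_K -> nat).
Variables (e : forall k, 'I_(n k) -> V) (ustar : 'I_K -> V -> V).
Hypothesis e_indep : forall k, lin_indep (e k).
Hypothesis e_cap : forall k, lspan (e k) `&` orth ip (lspan b) = [set 0].
Hypothesis ustar_pbdw : forall k w, lspan b w ->
  is_pbdw ip (lspan b) (affine (ubar k) (e k)) w (ustar k w).
Local Set Implicit Arguments.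

Lemma orth_sub_estimator k u : orth ip (lspan b) (u - ustar k (P u)).
Proof.
have -> : u - ustar k (P u) = (u - P u) - (ustar k (P u) - P u).
  by rewrite opprB addrA subrK.
apply: (orthB ip_inner); first exact: (P_proj u).2.
exact: (ustar_pbdw k (P u) (P_proj u).1).1.
Qed.

Lemma admissible_estimator_close sigma : admissible P M ubar e sigma ->
  forall u, M u -> exists k, `|u - ustar k (P u)| <= sigma.
Proof.
case=> Mk [eps [MkE [_ Mk_eps]]] u Mu.
have : (\bigcup_(k in [set: 'I_K]) Mk k) u by rewrite -MkE.
case=> k _ Mku; exists k; have [dist_eps mu_eps] := Mk_eps k.
have err := pbdw_error_le ip_inner P_proj (e_indep k) (e_cap k)
  (P_proj u).2 (ustar_pbdw k (P u) (P_proj u).1).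
rewrite -lee_fin; apply: le_trans err _; apply: le_trans mu_eps.
apply: lee_wpmul2l (dist_eps u Mku).
exact: le_trans lee01 (mu_ge1 ip_inner P_proj (e_cap k)).
Qed.

Lemma estimator_error_le_delta s (kstar : V -> 'I_K) : 0 <= s ->
  (forall u, M u -> Msig M s (ustar (kstar (P u)) (P u))) ->
  (ereal_sup [set (`|u - ustar (kstar (P u)) (P u)|)%:E | u in M]
     <= delta ip (lspan b) M s)%E.
Proof.
move=> s0 kstar_sig; apply: ge_ereal_sup => _ [u Mu <-].
apply: ereal_sup_ubound; exists u, (ustar (kstar (P u)) (P u)); split => //.
- exact: Msig_refl.
- exact: kstar_sig.
- exact: orth_sub_estimator.
Qed.

End Recovery.

Theorem mainTheorem14 (R : realType) (V : completeNormedModType R)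
  (ip : V -> V -> R) (Hip : is_inner_product ip)
  (M : set V) (HM : compact M)
  (m : nat) (b : 'I_m -> V) (Hb : lin_indep b)
  (P : V -> V) (HP : is_orth_proj ip (lspan b) P)
  (K : nat) (ubar : 'I_K -> V) (n : 'I_K -> nat) (e : forall k, 'I_(n k) -> V)
  (Hn : forall k, (n k <= m)%N)
  (He : forall k, lin_indep (e k))
  (HeW : forall k, lspan (e k) `&` orth ip (lspan b) = [set 0])
  (sigma : R) (Hsigma : 0 < sigma)
  (Hadm : admissible P M ubar e sigma)
  (ustar : 'I_K -> V -> V)
  (Hustar : forall k w, lspan b w -> is_pbdw ip (lspan b) (affine (ubar k) (e k)) w (ustar k w)) :
  (forall kstar : V -> 'I_K,
     (forall w, lspan b w -> forall k,
        (dist_set (ustar (kstar w) w) M <= dist_set (ustar k w) M)%E) ->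
     (ereal_sup [set (`|u - ustar (kstar (P u)) (P u)|)%:E | u in M]
        <= delta ip (lspan b) M sigma)%E) /\
  (forall (S : V -> R) (r Rc : R), 0 < r -> r <= Rc ->
     (forall v, 0 <= S v) ->
     (forall v, (r%:E * dist_set v M <= (S v)%:E)%E /\
                ((S v)%:E <= Rc%:E * dist_set v M)%E) ->
     forall kstar : V -> 'I_K,
     (forall w, lspan b w -> forall k, S (ustar (kstar w) w) <= S (ustar k w)) ->
     (ereal_sup [set (`|u - ustar (kstar (P u)) (P u)|)%:E | u in M]
        <= delta ip (lspan b) M (Rc / r * sigma))%E).
Proof.
have close := admissible_estimator_close Hip HP He HeW Hustar Hadm.
have Pb u : lspan b (P u) := (HP u).1.
have dist_close u k : M u -> `|u - ustar k (P u)| <= sigma ->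
    (dist_set (ustar k (P u)) M <= sigma%:E)%E.
  by move=> Mu uk; apply: le_trans (dist_set_le _ Mu) _; rewrite distrC lee_fin.
split=> [kstar kmin | S r Rc r0 rRc _ S_dist kstar kmin].
  apply: (estimator_error_le_delta Hip HP Hustar (ltW Hsigma)) => u Mu.
  have [k uk] := close u Mu.
  exact: le_trans (kmin _ (Pb u) k) (dist_close u k Mu uk).
have Rc0 : 0 <= Rc := le_trans (ltW r0) rRc.
apply: (estimator_error_le_delta Hip HP Hustar) => [|u Mu].
  by rewrite mulr_ge0 ?divr_ge0 ?(ltW r0) ?(ltW Hsigma).
have [k uk] := close u Mu.
set x := ustar (kstar (P u)) (P u).
have Sx : S x <= Rc * sigma.
  apply: le_trans (kmin _ (Pb u) k) _; rewrite -lee_fin.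
  apply: le_trans (S_dist _).2 _; rewrite EFinM lee_wpmul2l ?lee_fin //.
  exact: dist_close.
rewrite /Msig /= (_ : Rc / r * sigma = r^-1 * (Rc * sigma)); last by rewrite mulrCA mulrA.
by rewrite EFinM lee_pdivlMl //; apply: le_trans (S_dist x).1 _; rewrite lee_fin.
Qed.
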